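(* Let $R$ be a commutative Noetherian ring and $M$ an Artinian $R$-module. Then $\operatorname{Supp}_RM\subseteq\operatorname{Cos}_RM$. In particular, $\operatorname{Cos}_RM\cap V(J(M))=\operatorname{Supp}_RM$.
   Context: $\operatorname{Cos}_RM=\{\mathfrak{p}\in\operatorname{Spec}R:\operatorname{Hom}_R(R_{\mathfrak{p}},M)\neq0\}$. For Artinian $M$, $\operatorname{Supp}_RM$ is a finite set of maximal ideals and $J(M)=\bigcap_{\mathfrak{m}\in\operatorname{Supp}_RM}\mathfrak{m}$. *)

From mathcomp Require Import all_boot all_algebra.
Set Implicit Arguments. Unset Strict Implicit. Unset Printing Implicit Defensive.
Import GRing.Theory.
Local Open Scope ring_scope.

Section Defs.
Variable R : comNzRingType.

Definition is_ideal (I : R -> Prop) : Prop :=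
  I 0 /\ (forall x y, I x -> I y -> I (x + y)) /\ (forall r x, I x -> I (r * x)).

Definition is_prime_ideal (p : R -> Prop) : Prop :=
  is_ideal p /\ ~ p 1 /\ (forall a b, p (a * b) -> p a \/ p b).

Definition noetherian_ring : Prop :=
  forall I : nat -> R -> Prop, (forall n, is_ideal (I n)) ->
    (forall n x, I n x -> I n.+1 x) ->
    exists n0, forall n, (n0 <= n)%N -> forall x, I n x -> I n0 x.

Variable M : lmodType R.

Definition is_submodule (N : M -> Prop) : Prop :=
  N 0 /\ (forall x y, N x -> N y -> N (x + y)) /\ (forall r x, N x -> N (r *: x)).

Definition artinian_module : Prop :=
  forall N : nat -> M -> Prop, (forall n, is_submodule (N n)) ->
    (forall n x, N n.+1 x -> N n x) ->
    exists n0, forall n, (n0 <= n)%N -> forall x, N n0 x -> N n x.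

(* Localization at p: elements of R_p (resp. M_p) are fractions r/s with s
   outside p, where r/s = r'/s' iff u(s' r - s r') = 0 for some u outside p. *)
Definition frac_eq (p : R -> Prop) (r1 s1 r2 s2 : R) : Prop :=
  exists u, ~ p u /\ u * (s2 * r1 - s1 * r2) = 0.

(* an R-linear map R_p -> M, given on representatives (r, s), s outside p:
   well defined on classes, additive for fraction addition, and R-linear *)
Definition hom_loc (p : R -> Prop) (f : R -> R -> M) : Prop :=
  (forall r1 s1 r2 s2, ~ p s1 -> ~ p s2 -> frac_eq p r1 s1 r2 s2 ->
     f r1 s1 = f r2 s2) /\
  (forall r1 s1 r2 s2, ~ p s1 -> ~ p s2 ->
     f (s2 * r1 + s1 * r2) (s1 * s2) = f r1 s1 + f r2 s2) /\
  (forall a r s, ~ p s -> f (a * r) s = a *: f r s).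

(* Cos_R M : primes p with Hom_R(R_p, M) <> 0 *)
Definition in_Cos (p : R -> Prop) : Prop :=
  is_prime_ideal p /\
  exists f, hom_loc p f /\ exists r s, ~ p s /\ f r s <> 0.

(* Supp_R M : primes p with M_p <> 0, i.e. some fraction m/s is nonzero,
   where m/s = 0 in M_p iff u *: m = 0 for some u outside p *)
Definition in_Supp (p : R -> Prop) : Prop :=
  is_prime_ideal p /\
  exists (m : M) (s : R), ~ p s /\ ~ (exists u, ~ p u /\ u *: m = 0).

(* J(M) = intersection of the (maximal) ideals in Supp_R M *)
Definition JM : R -> Prop := fun x => forall q, in_Supp q -> q x.

Definition in_V (I : R -> Prop) (p : R -> Prop) : Prop :=
  is_prime_ideal p /\ forall x, I x -> p x.

End Defs.

(* An Artinian module is "divisible at its support": if M_p <> 0, the DCC on the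
   cyclic submodules R (t_n m), for a suitable sequence t_n outside p, yields an
   element x on which every s outside p acts invertibly on R x; then r/s |-> r s^-1 x
   is a nonzero map R_p -> M, so p is in Cos M.  Refining x further, every prime q
   of Supp M carries an element w with ann w contained in q and q nilpotent on w;
   such a q is maximal among primes, and a DCC argument on the submodules spanned
   by tails of a sequence of such w's shows that Supp M contains no infinite
   sequence of distinct primes.  Hence a prime containing J(M) and outside Supp M
   would produce such an infinite sequence, whence the equality on V(J(M)). *)
From mathcomp Require Import all_boot all_algebra.
From mathcomp Require Import ring.
From Stdlib Require Import Classical ClassicalEpsilon.
Set Implicit Arguments. Unset Strict Implicit. Unset Printing Implicit Defensive.
Import GRing.Theory.
Local Open Scope ring_scope.

Lemma choice_on (A B : Type) (P : A -> Prop) (Q : A -> B -> Prop) :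
  (forall x, P x -> exists y, Q x y) -> B -> exists f : A -> B, forall x, P x -> Q x (f x).
Proof.
move=> exQ b0; apply: (ClassicalEpsilon.choice (fun x y => P x -> Q x y)) => x.
by case: (classic (P x)) => [/exQ [y Qy] | nPx]; [exists y | exists b0].
Qed.

Section PrimeIdeal.
Variables (R : comNzRingType) (p : R -> Prop).
Hypothesis p_prime : is_prime_ideal p.

Lemma prime_notin1 : ~ p 1.
Proof. by case: p_prime => _ []. Qed.

Lemma prime_notin_mul a b : ~ p a -> ~ p b -> ~ p (a * b).
Proof. by case: p_prime => _ [_ pmul] pa pb /pmul []. Qed.

Lemma prime_notin_exp a k : ~ p a -> ~ p (a ^+ k).
Proof.
move=> pa; elim: k => [|k IHk]; first by rewrite expr0; exact: prime_notin1.
by rewrite exprS; apply: prime_notin_mul.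
Qed.

Lemma prime_mull a b : p a -> p (b * a).
Proof. by case: p_prime => [[_ [_ pmul]] _]; apply: pmul. Qed.

Lemma prime_mulr a b : p a -> p (a * b).
Proof. by rewrite mulrC; apply: prime_mull. Qed.

Lemma prime_notin_1Bmul a c : p a -> ~ p (1 - a * c).
Proof.
case: p_prime => [[_ [padd _]] _] pa p1ac; apply: prime_notin1.
have -> : (1 : R) = (1 - a * c) + c * a by ring.
by apply: padd => //; apply: prime_mull.
Qed.

End PrimeIdeal.

Section ArtinianModule.
Variables (R : comNzRingType) (M : lmodType R).
Hypothesis M_artinian : artinian_module M.

Lemma artinian_cyclic_chain (a d : nat -> R) (x : M) :
  (forall n, a n.+1 = a n * d n) -> exists n c, a n *: x = (c * a n.+1) *: x.
Proof.
move=> aS; pose N n (y : M) := exists c, y = (c * a n) *: x.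
have N_sub n : is_submodule (N n).
  split; first by exists 0; rewrite mul0r scale0r.
  split; first by move=> _ _ [c1 ->] [c2 ->]; exists (c1 + c2); rewrite mulrDl scalerDl.
  by move=> r _ [c ->]; exists (r * c); rewrite scalerA mulrA.
have N_dec n y : N n.+1 y -> N n y.
  by rewrite /N => -[c ->]; exists (c * d n); rewrite aS mulrA mulrAC.
have [n0 stable] := M_artinian N_sub N_dec.
have [|c anE] := stable n0.+1 (leqnSn n0) (a n0 *: x); first by exists 1; rewrite mul1r.
by exists n0, c.
Qed.

Definition divisible_outside (p : R -> Prop) (x : M) : Prop :=
  forall s, ~ p s -> exists b, (s * b) *: x = x.

Lemma divisible_scale_inj (p : R -> Prop) (x : M) s c :
  divisible_outside p x -> ~ p s -> s *: (c *: x) = 0 -> c *: x = 0.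
Proof.
move=> x_div ps scx0; have [b sbx] := x_div s ps.
rewrite -sbx scalerA.
have -> : c * (s * b) = b * (s * c) by ring.
by rewrite -!scalerA scx0 scaler0.
Qed.

Lemma exists_divisible (p : R -> Prop) (m : M) :
  is_prime_ideal p -> (forall u, ~ p u -> u *: m <> 0) ->
  exists t, ~ p t /\ divisible_outside p (t *: m).
Proof.
move=> p_prime m_faithful; apply: NNPP => no_div.
(* Otherwise every t outside p has a non-divisor s t, and multiplying by these
   yields a strictly descending chain of cyclic submodules. *)
have non_divisor t : ~ p t ->
    exists s, ~ p s /\ forall b, (s * b) *: (t *: m) <> t *: m.
  move=> pt; apply: NNPP => no_s; apply: no_div; exists t; split => // s ps.
  apply: NNPP => no_b; apply: no_s; exists s; split => // b sbt.
  by apply: no_b; exists b.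
have [sf sfP] := choice_on non_divisor 0.
pose ts n := iter n (fun t => t * sf t) 1.
have ts_notin n : ~ p (ts n).
  elim: n => [|n IHn]; first exact: prime_notin1.
  by rewrite /ts iterS; apply: prime_notin_mul => //; case: (sfP _ IHn).
have [n [c tsE]] := artinian_cyclic_chain (a := ts) (d := fun n => sf (ts n)) m (fun n => erefl).
case: (sfP _ (ts_notin n)) => _ /(_ c); apply.
by rewrite scalerA tsE /ts iterS -/(ts n); congr (_ *: _); ring.
Qed.

Lemma supp_divisible (p : R -> Prop) :
  in_Supp M p -> exists x : M,
    (forall u, ~ p u -> u *: x <> 0) /\ divisible_outside p x.
Proof.
move=> [p_prime [m [_ [_ m_faithful]]]].
have {}m_faithful u : ~ p u -> u *: m <> 0 by move=> pu um0; apply: m_faithful; exists u.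
have [t [pt t_div]] := exists_divisible p_prime m_faithful.
exists (t *: m); split=> // u pu; rewrite scalerA.
by apply: m_faithful; apply: prime_notin_mul.
Qed.

Lemma supp_cos (p : R -> Prop) : in_Supp M p -> in_Cos M p.
Proof.
move=> p_supp; have p_prime := p_supp.1.
have [x [x_faithful x_div]] := supp_divisible p_supp.
have [inv invP] := choice_on x_div 0.
have inj := divisible_scale_inj x_div.
split=> //; exists (fun r s => (r * inv s) *: x); split; last first.
  have p1 := prime_notin1 p_prime.
  by exists 1, 1; split=> //; rewrite invP // -[x]scale1r; apply: x_faithful.
split; [|split].
- move=> r1 s1 r2 s2 ps1 ps2 [u [pu frac0]].
  have pus : ~ p (u * s1 * s2) by apply: prime_notin_mul => //; apply: prime_notin_mul.
  apply/eqP; rewrite -subr_eq0 -scalerBl; apply/eqP; apply: (inj _ _ pus).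
  have -> : (u * s1 * s2) *: ((r1 * inv s1 - r2 * inv s2) *: x) =
      (u * s2 * r1) *: ((s1 * inv s1) *: x) - (u * s1 * r2) *: ((s2 * inv s2) *: x).
    by rewrite !scalerA -scalerBl; congr (_ *: _); ring.
  rewrite !invP // -scalerBl.
  have -> : u * s2 * r1 - u * s1 * r2 = u * (s2 * r1 - s1 * r2) by ring.
  by rewrite frac0 scale0r.
- move=> r1 s1 r2 s2 ps1 ps2.
  have ps : ~ p (s1 * s2) by apply: prime_notin_mul.
  rewrite -scalerDl; apply/eqP; rewrite -subr_eq0 -scalerBl; apply/eqP.
  apply: (inj _ _ ps).
  have -> : (s1 * s2) *: (((s2 * r1 + s1 * r2) * inv (s1 * s2) -
                          (r1 * inv s1 + r2 * inv s2)) *: x) =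
      (s2 * r1 + s1 * r2) *: ((s1 * s2 * inv (s1 * s2)) *: x) -
      ((s2 * r1) *: ((s1 * inv s1) *: x) + (s1 * r2) *: ((s2 * inv s2) *: x)).
    by rewrite !scalerA -scalerDl -scalerBl; congr (_ *: _); ring.
  by rewrite !invP // -scalerDl subrr.
- by move=> a r s _; rewrite scalerA mulrA.
Qed.

Definition supp_witness (q : R -> Prop) (w : M) : Prop :=
  [/\ forall c, c *: w = 0 -> q c,
      forall a, q a -> exists k, a ^+ k *: w = 0
    & divisible_outside q w].

Lemma supp_witness_exists (q : R -> Prop) :
  in_Supp M q -> exists w, supp_witness q w.
Proof.
move=> q_supp; have q_prime := q_supp.1.
have [x [x_faithful x_div]] := supp_divisible q_supp.
exists x; split=> // [c cx0 | a qa].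
  by apply: NNPP => qc; apply: (x_faithful c).
have [n [c anE]] := artinian_cyclic_chain (a := fun n => a ^+ n) (d := fun=> a) x
  (fun n => exprSr a n).
exists n; apply: (divisible_scale_inj x_div (prime_notin_1Bmul q_prime (c := c) qa)).
apply/eqP; rewrite scalerBl scale1r subr_eq0 {1}anE scalerA exprS.
by apply/eqP; congr (_ *: _); ring.
Qed.

Lemma supp_witness_max (q q' : R -> Prop) (w : M) :
  supp_witness q w -> is_prime_ideal q' -> (forall z, q z -> q' z) ->
  forall a, q' a -> q a.
Proof.
move=> [w_ann _ w_div] q'_prime qq' a q'a; apply: NNPP => qa.
have [b abw] := w_div a qa.
apply: (prime_notin_1Bmul q'_prime (c := b) q'a); apply/qq'/w_ann.
by rewrite scalerBl scale1r abw subrr.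
Qed.

Lemma submodule_killed_outside (q : R -> Prop) :
  is_prime_ideal q -> is_submodule (fun y : M => exists u, ~ q u /\ u *: y = 0).
Proof.
move=> q_prime; split.
  by exists 1; split; [exact: prime_notin1 | rewrite scaler0].
split=> [y1 y2 [u1 [qu1 uy1]] [u2 [qu2 uy2]] | r y [u [qu uy]]].
  exists (u1 * u2); split; first exact: prime_notin_mul.
  have -> : (u1 * u2) *: (y1 + y2) = u2 *: (u1 *: y1) + u1 *: (u2 *: y2).
    by rewrite scalerDr !scalerA [u2 * u1]mulrC.
  by rewrite uy1 uy2 !scaler0 addr0.
by exists u; split=> //; rewrite scalerA mulrC -scalerA uy scaler0.
Qed.

Definition span_from (w : nat -> M) (n : nat) (y : M) : Prop :=
  forall P, is_submodule P -> (forall j, (n <= j)%N -> P (w j)) -> P y.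

Lemma artinian_span_tail (w : nat -> M) : exists n, span_from w n.+1 (w n).
Proof.
have span_sub n : is_submodule (span_from w n).
  split; first by move=> P [].
  split=> [y1 y2 y1P y2P | r y yP] P P_sub wP; case: (P_sub) => _ [Padd Pscale].
    by apply: Padd; [apply: y1P | apply: y2P].
  by apply: Pscale; apply: yP.
have span_dec n y : span_from w n.+1 y -> span_from w n y.
  by move=> yP P P_sub wP; apply: yP => // j /ltnW; apply: wP.
have [n stable] := M_artinian span_sub span_dec.
by exists n; apply: (stable n.+1 (leqnSn n)) => P _; apply.
Qed.

Lemma supp_no_injective_seq (q : nat -> R -> Prop) :
  (forall n, in_Supp M (q n)) ->
  (forall n j, (n < j)%N -> ~ (forall x, q n x <-> q j x)) -> False.
Proof.
move=> q_supp q_inj.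
have [w wP] := ClassicalEpsilon.choice _ (fun n => supp_witness_exists (q_supp n)).
(* Supp primes are maximal among primes, hence pairwise incomparable. *)
have new_elt n j : (n < j)%N -> exists z, q j z /\ ~ q n z.
  move=> ltnj; apply: NNPP => no_z; apply: (q_inj n j ltnj) => x.
  have qjn z : q j z -> q n z by move=> qjz; apply: NNPP => qnz; apply: no_z; exists z.
  by split; [exact: (supp_witness_max (wP j) (q_supp n).1 qjn) | apply: qjn].
have [n wn_span] := artinian_span_tail w.
have [j ltnj | u [qu uw0]] := wn_span _ (submodule_killed_outside (q_supp n).1).
  have [z [qjz qnz]] := new_elt n j ltnj.
  have [_ w_nil _] := wP j; have [k zkw] := w_nil z qjz.
  by exists (z ^+ k); split=> //; exact: (prime_notin_exp (q_supp n).1 qnz).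
by apply: qu; case: (wP n) => w_ann _ _; apply: w_ann.
Qed.

Lemma V_JM_supp (p : R -> Prop) :
  is_prime_ideal p -> (forall x, JM M x -> p x) -> in_Supp M p.
Proof.
move=> p_prime pJ; apply: NNPP => p_nsupp.
have killed (m : M) : exists u, ~ p u /\ u *: m = 0.
  apply: NNPP => m_faithful; apply: p_nsupp; split=> //.
  by exists m, 1; split; first exact: prime_notin1.
(* For x outside p, some q in Supp avoids x, and ann w for its witness w meets
   q outside p: this gives g x = (q, y) with x outside q and y in q minus p. *)
have split_off x : ~ p x -> exists qy : (R -> Prop) * R,
    [/\ in_Supp M qy.1, ~ qy.1 x, qy.1 qy.2 & ~ p qy.2].
  move=> npx.
  have [q [q_supp qx]] : exists q, in_Supp M q /\ ~ q x.
    apply: NNPP => no_q; apply/npx/pJ => q q_supp.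
    by apply: NNPP => qx; apply: no_q; exists q.
  have [w [w_ann _ _]] := supp_witness_exists q_supp.
  have [u [pu uw0]] := killed w.
  by exists (q, u); split=> //; apply: w_ann.
have [g gP] := choice_on split_off (fun=> True, 0).
pose xs n := iter n (fun x => x * (g x).2) 1.
have xs_notin n : ~ p (xs n).
  elim: n => [|n IHn]; first exact: prime_notin1.
  by rewrite /xs iterS; apply: prime_notin_mul => //; case: (gP _ IHn).
have qs_prime n : is_prime_ideal (g (xs n)).1 by case: (gP _ (xs_notin n)) => [[]].
have xs_in n j : (n < j)%N -> (g (xs n)).1 (xs j).
  elim: j => [//|j IHj]; rewrite ltnS leq_eqVlt => /orP [/eqP <- | ltnj].
    rewrite /xs iterS -/(xs n); apply: (prime_mull (qs_prime n)).
    by case: (gP _ (xs_notin n)).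
  by rewrite /xs iterS -/(xs j); apply: (prime_mulr (qs_prime n)); apply: IHj.
apply: (@supp_no_injective_seq (fun n => (g (xs n)).1)).
  by move=> n; case: (gP _ (xs_notin n)).
move=> n j ltnj eq_nj; case: (gP _ (xs_notin j)) => _ qj_nx _ _.
by apply/qj_nx/eq_nj/xs_in.
Qed.

End ArtinianModule.

Theorem lemma3p6 (R : comNzRingType) (M : lmodType R) :
  noetherian_ring R -> artinian_module M ->
  (forall p : R -> Prop, in_Supp M p -> in_Cos M p) /\
  (forall p : R -> Prop, (in_Cos M p /\ in_V (JM M) p) <-> in_Supp M p).
Proof.
move=> _ M_artinian; split=> [p | p]; first exact: supp_cos.
split=> [[_ [p_prime pJ]] | p_supp]; first exact: V_JM_supp.
by split; [apply: supp_cos | split=> [|x]; [case: p_supp | apply]].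
Qed.
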